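(* Let $\gamma>1$. There exist an integer $n_0(\gamma)$ and a constant $a(\gamma)>0$ such that for every $n\ge n_0(\gamma)$ the unique negative root $\lambda_n$ of $$g_n(\lambda)=\frac{1}{\lambda}+\frac{\frac{d}{d\lambda}h^{(1)}_n(-i\lambda)}{h^{(1)}_n(-i\lambda)}-\gamma=0$$ satisfies $$\Bigl|\lambda_n+\sqrt{\tfrac{n(n+1)}{\gamma^2-1}}\Bigr|\le a(\gamma).$$
   Context: $h^{(1)}_n$ is the spherical Hankel function of the first kind; for $\lambda<0$, $h^{(1)}_n(-i\lambda)=(-i)^n\frac{e^{\lambda}}{\lambda}R_n(-\frac{1}{2\lambda})$ (up to an $n$-independent constant) with $R_n(w)=\sum_{m=0}^n\frac{(n+m)!}{m!(n-m)!}w^m$; $\frac{d}{d\lambda}h^{(1)}_n(-i\lambda)$ is the derivative of $\lambda\mapsto h^{(1)}_n(-i\lambda)$. For $\gamma>1$ and $n\ge1$, $g_n$ has exactly one root in $(-\infty,0)$. *)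

From Stdlib Require Import Arith Reals Lra Lia.
Open Scope R_scope.

Definition Rpoly (n : nat) (w : R) : R :=
  sum_f_R0 (fun m => INR (fact (n + m)) / (INR (fact m) * INR (fact (n - m))) * w ^ m) n.

(* For lam < 0: h^{(1)}_n(-i lam) = C * (-i)^n * e^lam / lam * R_n(-1/(2 lam)),
   C an n-independent constant.  The nonzero factor C * (-i)^n does not depend on
   lam and cancels in the logarithmic derivative h'/h, so we use the real function
   below in its place. *)
Definition hankel_neg (n : nat) (lam : R) : R :=
  exp lam / lam * Rpoly n (- / (2 * lam)).

From Stdlib Require Import Arith Reals Lra Lia Psatz.
From Coquelicot Require Import Coquelicot.
Open Scope R_scope.

(* Put w = -1/(2 lam) > 0 and regard the terms t_m = c_{n,m} w^m of R_n(w) as weights on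
   {0, ..., n}, with moments S_k = sum_m m^k t_m.  The logarithmic derivative of the Hankel
   function is 1 - 1/lam + 2 w S_1/S_0, so g_n(lam) = 0 says that the mean mu = S_1/S_0 equals
   c/w, where c = (gamma - 1)/2.  The recurrence m c_{n,m} = (n+m)(n-m+1) c_{n,m-1} yields two
   linear relations between S_0, ..., S_3; together with the positivity of
   sum_m (m - mu)^2 t_m and of sum_m m (m - mu)^2 t_m they give, for the variance V,
   c n(n+1) = (1+c) mu^2 + c mu + c V and (1+c) V <= mu.  With u = -lam = mu/(2c) this reads
   u^2 <= n(n+1)/(gamma^2 - 1) <= u^2 + u, hence |lam + sqrt(n(n+1)/(gamma^2 - 1))| <= 1/2
   for every n. *)

Lemma is_derive_poly (b : nat -> R) (k : nat) (x : R) :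
  is_derive (fun y => sum_f_R0 (fun m => b m * y ^ m) k) x
    (sum_f_R0 (fun m => b m * (INR m * x ^ pred m)) k).
Proof.
  induction k as [|k IH]; simpl sum_f_R0.
  - auto_derive; [easy|]. simpl. ring.
  - apply (is_derive_plus (V := R_NormedModule)); [exact IH|].
    auto_derive; [easy|]. destruct k; simpl; ring.
Qed.

Lemma Rabs_sqrt_sub_le (u X : R) : 0 <= u -> u ^ 2 <= X <= u ^ 2 + u ->
  Rabs (sqrt X - u) <= / 2.
Proof.
  intros Hu [HuX HXu].
  pose proof (sqrt_pos X) as Hs0.
  pose proof (sqrt_sqrt X ltac:(nra)) as Hs.
  apply Rabs_le. split; nra.
Qed.

Lemma variance_le_mean (mu m2 m3 c N : R) : 0 < c -> 0 < mu ->
  mu ^ 2 = c * (N - mu - m2) ->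
  mu * m2 = c * (N + (N - 1) * mu - 2 * m2 - m3) ->
  mu ^ 2 <= m2 -> 2 * mu * m2 - mu ^ 3 <= m3 ->
  (1 + c) * (m2 - mu ^ 2) <= mu.
Proof.
  intros Hc Hmu H1 H2 Hv2 Hv3.
  assert (Hk : (m2 - mu ^ 2) * (mu + c + c * mu) <= mu ^ 2).
  { assert (c * m3 >= c * (2 * mu * m2 - mu ^ 3)) by nra. nra. }
  assert (Hmu2 : (1 + c) * (m2 - mu ^ 2) * mu <= mu * mu) by nra.
  nra.
Qed.

Lemma window_of_variance (mu V c N : R) : 0 < c -> 0 < mu -> 0 <= V <= mu ->
  c * N = (1 + c) * mu ^ 2 + c * mu + c * V ->
  (mu / (2 * c)) ^ 2 <= N / (4 * c * (1 + c)) <= (mu / (2 * c)) ^ 2 + mu / (2 * c).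
Proof.
  intros Hc Hmu HV HN.
  assert (Hgap : N / (4 * c * (1 + c)) = (mu / (2 * c)) ^ 2 + (mu + V) * / (4 * c * (1 + c))).
  { assert (HN' : N = ((1 + c) * mu ^ 2 + c * mu + c * V) / c) by (rewrite <- HN; field; lra).
    rewrite HN'. field; lra. }
  assert (HD : 0 < / (4 * c * (1 + c))) by (apply Rinv_0_lt_compat; nra).
  assert (Hmu' : mu / (2 * c) = 2 * (1 + c) * mu * / (4 * c * (1 + c))) by (field; lra).
  rewrite Hgap. split; [nra|].
  apply Rplus_le_compat_l. rewrite Hmu'. apply Rmult_le_compat_r; nra.
Qed.

Definition hankel_coef (n m : nat) : R :=
  INR (fact (n + m)) / (INR (fact m) * INR (fact (n - m))).

Lemma hankel_coef_pos (n m : nat) : 0 < hankel_coef n m.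
Proof.
  apply Rdiv_lt_0_compat; [apply INR_fact_lt_0|].
  apply Rmult_lt_0_compat; apply INR_fact_lt_0.
Qed.

Lemma hankel_coef_succ (n m : nat) : (m < n)%nat ->
  INR (S m) * hankel_coef n (S m) = hankel_coef n m * (INR (n + m + 1) * INR (n - m)).
Proof.
  intros Hmn. destruct (Nat.le_exists_sub (S m) n Hmn) as [k [-> _]].
  unfold hankel_coef.
  replace (k + S m + S m)%nat with (S (k + S m + m)) by lia.
  replace (k + S m + m + 1)%nat with (S (k + S m + m)) by lia.
  replace (k + S m - S m)%nat with k by lia.
  replace (k + S m - m)%nat with (S k) by lia.
  rewrite !fact_simpl, !mult_INR.
  pose proof (INR_fact_neq_0 m). pose proof (INR_fact_neq_0 k).
  pose proof (INR_fact_neq_0 (k + S m + m)).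
  assert (INR (S m) <> 0) by (apply not_0_INR; lia).
  assert (INR (S k) <> 0) by (apply not_0_INR; lia).
  field; auto.
Qed.

Section Moments.

Variables (n : nat) (w : R).

Definition weight (m : nat) : R := hankel_coef n m * w ^ m.

Definition moment (k : nat) : R := sum_f_R0 (fun m => INR m ^ k * weight m) n.

Let N := INR n * INR (n + 1).

Lemma moment_cubic (a b c d : R) (f : nat -> R) :
  (forall m, (m <= n)%nat ->
     f m = (a + b * INR m + c * INR m ^ 2 + d * INR m ^ 3) * weight m) ->
  sum_f_R0 f n = a * moment 0 + b * moment 1 + c * moment 2 + d * moment 3.
Proof.
  intros Hf. unfold moment. rewrite !scal_sum, <- !sum_plus.
  apply sum_eq. intros m Hm. rewrite Hf by exact Hm. simpl. ring.
Qed.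

Lemma weight_pos (m : nat) : 0 < w -> 0 < weight m.
Proof.
  intros Hw. apply Rmult_lt_0_compat; [apply hankel_coef_pos | apply pow_lt, Hw].
Qed.

Lemma moment0_pos : 0 < w -> 0 < moment 0.
Proof.
  intros Hw. apply tech1. intros m _. rewrite pow_O, Rmult_1_l. exact (weight_pos m Hw).
Qed.

Lemma moment_cubic_nonneg (a b c d : R) : 0 < w ->
  (forall m, (m <= n)%nat -> 0 <= a + b * INR m + c * INR m ^ 2 + d * INR m ^ 3) ->
  0 <= a * moment 0 + b * moment 1 + c * moment 2 + d * moment 3.
Proof.
  intros Hw Hp. rewrite <- (moment_cubic _ _ _ _ _ (fun _ _ => eq_refl)).
  rewrite <- (Rmult_0_l (INR (S n))), <- sum_cte.
  apply sum_Rle. intros m Hm.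
  apply Rmult_le_pos; [exact (Hp m Hm) | exact (Rlt_le _ _ (weight_pos m Hw))].
Qed.

Lemma central_moment_nonneg (M : R) : 0 < w ->
  0 <= moment 2 - 2 * M * moment 1 + M ^ 2 * moment 0.
Proof.
  intros Hw.
  replace (moment 2 - 2 * M * moment 1 + M ^ 2 * moment 0)
    with (M ^ 2 * moment 0 + -2 * M * moment 1 + 1 * moment 2 + 0 * moment 3) by ring.
  apply moment_cubic_nonneg; [exact Hw|]. intros m _.
  pose proof (pow2_ge_0 (INR m - M)). nra.
Qed.

Lemma size_biased_central_moment_nonneg (M : R) : 0 < w ->
  0 <= moment 3 - 2 * M * moment 2 + M ^ 2 * moment 1.
Proof.
  intros Hw.
  replace (moment 3 - 2 * M * moment 2 + M ^ 2 * moment 1)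
    with (0 * moment 0 + M ^ 2 * moment 1 + -2 * M * moment 2 + 1 * moment 3) by ring.
  apply moment_cubic_nonneg; [exact Hw|]. intros m _.
  pose proof (Rmult_le_pos _ _ (pos_INR m) (pow2_ge_0 (INR m - M))). nra.
Qed.

Lemma moment_shift (psi : nat -> R) :
  sum_f_R0 (fun m => INR m * weight m * psi m) n =
  w * sum_f_R0 (fun m => INR (n + m + 1) * INR (n - m) * weight m * psi (S m)) n.
Proof.
  destruct (Nat.eq_0_gt_0_cases n) as [Hn | Hn].
  { rewrite Hn. simpl. ring. }
  rewrite decomp_sum, (sum_N_predN _ n) by exact Hn.
  replace (n - n)%nat with 0%nat by lia.
  rewrite Rmult_plus_distr_l, scal_sum.
  enough (Hsum : sum_f_R0 (fun i => INR (S i) * weight (S i) * psi (S i)) (pred n) =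
      sum_f_R0 (fun m => INR (n + m + 1) * INR (n - m) * weight m * psi (S m) * w) (pred n))
    by (rewrite Hsum; simpl INR; ring).
  apply sum_eq. intros m Hm. unfold weight.
  replace (INR (S m) * (hankel_coef n (S m) * w ^ S m))
    with (INR (S m) * hankel_coef n (S m) * w ^ S m) by ring.
  rewrite hankel_coef_succ by lia. simpl pow. ring.
Qed.

Lemma shift_factor (m : nat) : (m <= n)%nat ->
  INR (n + m + 1) * INR (n - m) = N - INR m - INR m ^ 2.
Proof. intros Hm. unfold N. rewrite minus_INR, !plus_INR by exact Hm. simpl. ring. Qed.

Lemma moment1_rec : moment 1 = w * (N * moment 0 - moment 1 - moment 2).
Proof.
  pose proof (moment_shift (fun _ => 1)) as Hs.
  rewrite (moment_cubic 0 1 0 0) in Hs by (intros; simpl; ring).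
  rewrite (moment_cubic N (-1) (-1) 0) in Hs
    by (intros m Hm; rewrite shift_factor by exact Hm; ring).
  transitivity (0 * moment 0 + 1 * moment 1 + 0 * moment 2 + 0 * moment 3); [ring|].
  rewrite Hs. ring.
Qed.

Lemma moment2_rec :
  moment 2 = w * (N * moment 0 + (N - 1) * moment 1 - 2 * moment 2 - moment 3).
Proof.
  pose proof (moment_shift INR) as Hs.
  rewrite (moment_cubic 0 0 1 0) in Hs by (intros; simpl; ring).
  rewrite (moment_cubic N (N - 1) (-2) (-1)) in Hs
    by (intros m Hm; rewrite shift_factor, S_INR by exact Hm; ring).
  transitivity (0 * moment 0 + 0 * moment 1 + 1 * moment 2 + 0 * moment 3); [ring|].
  rewrite Hs. ring.
Qed.

Lemma moment_root_window (c : R) : 0 < w -> 0 < c -> w * moment 1 = c * moment 0 ->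
  (/ (2 * w)) ^ 2 <= N / (4 * c * (1 + c)) <= (/ (2 * w)) ^ 2 + / (2 * w).
Proof.
  intros Hw Hc Hroot.
  pose proof (moment0_pos Hw) as H0.
  set (mu := moment 1 / moment 0).
  set (m2 := moment 2 / moment 0).
  set (m3 := moment 3 / moment 0).
  assert (E1 : moment 1 = mu * moment 0) by (unfold mu; field; lra).
  assert (E2 : moment 2 = m2 * moment 0) by (unfold m2; field; lra).
  assert (E3 : moment 3 = m3 * moment 0) by (unfold m3; field; lra).
  assert (Hmu : w * mu = c).
  { apply (Rmult_eq_reg_r (moment 0)); [|lra]. rewrite <- Hroot, E1. ring. }
  assert (Hmu0 : 0 < mu) by nra.
  assert (R1 : mu = w * (N - mu - m2)).
  { apply (Rmult_eq_reg_r (moment 0)); [|lra].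
    rewrite <- E1, moment1_rec at 1. rewrite E1, E2. ring. }
  assert (R2 : m2 = w * (N + (N - 1) * mu - 2 * m2 - m3)).
  { apply (Rmult_eq_reg_r (moment 0)); [|lra].
    rewrite <- E2, moment2_rec at 1. rewrite E1, E2, E3. ring. }
  pose proof (central_moment_nonneg mu Hw) as V2.
  pose proof (size_biased_central_moment_nonneg mu Hw) as V3.
  rewrite E1, E2 in V2. rewrite E1, E2, E3 in V3.
  assert (G1 : mu ^ 2 = c * (N - mu - m2)) by (rewrite <- Hmu; nra).
  assert (G2 : mu * m2 = c * (N + (N - 1) * mu - 2 * m2 - m3)) by (rewrite <- Hmu; nra).
  assert (Hvar : (1 + c) * (m2 - mu ^ 2) <= mu)
    by (apply (variance_le_mean mu m2 m3 c N); nra).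
  replace (/ (2 * w)) with (mu / (2 * c)) by (rewrite <- Hmu; field; lra).
  apply (window_of_variance mu (m2 - mu ^ 2)); nra.
Qed.

End Moments.

Lemma Rpoly_moment0 (n : nat) (w : R) : Rpoly n w = moment n w 0.
Proof. apply sum_eq. intros m _. unfold weight, hankel_coef. ring. Qed.

Lemma Rpoly_derive (n : nat) (w : R) : w <> 0 ->
  is_derive (Rpoly n) w (moment n w 1 / w).
Proof.
  intros Hw.
  replace (moment n w 1 / w)
    with (sum_f_R0 (fun m => hankel_coef n m * (INR m * w ^ pred m)) n).
  { exact (is_derive_poly (hankel_coef n) n w). }
  unfold moment, Rdiv. rewrite Rmult_comm, scal_sum.
  apply sum_eq. intros [|m] _; unfold weight; simpl; field; exact Hw.
Qed.

Lemma hankel_neg_derive (n : nat) (lam w : R) : lam < 0 -> w = - / (2 * lam) ->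
  derivable_pt_lim (hankel_neg n) lam
    (exp lam / lam * ((1 - / lam) * moment n w 0 + 2 * w * moment n w 1)).
Proof.
  intros Hlam Hw. apply is_derive_Reals. unfold hankel_neg.
  assert (He : is_derive (fun x => exp x / x) lam (exp lam / lam * (1 - / lam)))
    by (auto_derive; [lra | field; lra]).
  assert (Hr : is_derive (fun x => Rpoly n (- / (2 * x))) lam
                 (/ (2 * lam ^ 2) * (moment n w 1 / w))).
  { apply (is_derive_comp (Rpoly n) (fun x => - / (2 * x))).
    - rewrite Hw. apply Rpoly_derive. apply Ropp_neq_0_compat, Rinv_neq_0_compat. lra.
    - auto_derive; [lra | field; lra]. }
  replace (exp lam / lam * ((1 - / lam) * moment n w 0 + 2 * w * moment n w 1))
    with (exp lam / lam * (1 - / lam) * Rpoly n (- / (2 * lam))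
          + exp lam / lam * (/ (2 * lam ^ 2) * (moment n w 1 / w))).
  { exact (is_derive_mult _ _ _ _ _ He Hr Rmult_comm). }
  rewrite Rpoly_moment0, <- Hw. subst w. field. lra.
Qed.

Lemma hankel_neg_log_derivative (n : nat) (lam w dH : R) :
  lam < 0 -> w = - / (2 * lam) -> derivable_pt_lim (hankel_neg n) lam dH ->
  dH / hankel_neg n lam = 1 - / lam + 2 * w * moment n w 1 / moment n w 0.
Proof.
  intros Hlam Hw Hd.
  assert (Hw0 : 0 < w) by (subst w; apply Ropp_0_gt_lt_contravar, Rinv_lt_0_compat; lra).
  pose proof (moment0_pos n w Hw0) as H0.
  pose proof (exp_pos lam) as He.
  rewrite (uniqueness_limite _ _ _ _ Hd (hankel_neg_derive n lam w Hlam Hw)).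
  unfold hankel_neg. rewrite Rpoly_moment0, <- Hw. field. lra.
Qed.

Theorem lemma4p1 (gamma : R) (hgamma : 1 < gamma) :
  exists (n0 : nat) (a : R), 0 < a /\
    forall (n : nat) (lam dH : R),
      (n0 <= n)%nat ->
      lam < 0 ->
      derivable_pt_lim (hankel_neg n) lam dH ->
      / lam + dH / hankel_neg n lam - gamma = 0 ->
      Rabs (lam + sqrt (INR n * INR (n + 1) / (gamma ^ 2 - 1))) <= a.
Proof.
  exists 1%nat, (/ 2). split; [lra|].
  intros n lam dH _ Hlam Hd Hg.
  set (c := (gamma - 1) / 2).
  set (w := - / (2 * lam)).
  assert (Hw : 0 < w) by (apply Ropp_0_gt_lt_contravar, Rinv_lt_0_compat; lra).
  pose proof (moment0_pos n w Hw) as H0.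
  rewrite (hankel_neg_log_derivative n lam w dH Hlam eq_refl Hd) in Hg.
  assert (Hroot : w * moment n w 1 = c * moment n w 0).
  { assert (Hmean : 2 * w * moment n w 1 / moment n w 0 = gamma - 1) by lra.
    unfold c. rewrite <- Hmean. field. lra. }
  pose proof (moment_root_window n w c Hw ltac:(unfold c; lra) Hroot) as Hwin.
  replace (gamma ^ 2 - 1) with (4 * c * (1 + c)) by (unfold c; field).
  replace lam with (- / (2 * w)) by (unfold w; field; lra).
  rewrite Rplus_comm.
  apply Rabs_sqrt_sub_le; [|exact Hwin].
  apply Rlt_le, Rinv_0_lt_compat. lra.
Qed.
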